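(* Let $L$ be a finite-dimensional solvable Lie algebra over an arbitrary field $F$ and let $U$ be a non-zero core-free semi-modular subalgebra of $L$. Then $\dim U=1$ and $L$ is almost abelian.
   Context: For subalgebras $U,B$ of a Lie algebra $L$, $\langle U,B\rangle$ denotes the subalgebra generated by $U\cup B$. A subalgebra $B$ covers a subalgebra $A$ if $A$ is a maximal subalgebra of $B$. $U$ is upper modular (um) in $L$ if whenever $B$ is a subalgebra of $L$ which covers $U\cap B$, then $\langle U,B\rangle$ covers $U$; $U$ is lower modular (lm) in $L$ if whenever $B$ is a subalgebra of $L$ such that $\langle U,B\rangle$ covers $U$, then $B$ covers $U\cap B$; $U$ is semi-modular (sm) in $L$ if it is both um and lm in $L$. The core $U_L$ of $U$ is the largest ideal of $L$ contained in $U$; $U$ is core-free if $U_L=0$. $L$ is almost abelian if $L=L^2\oplus Fx$ for some $x$, where $L^2=[L,L]$ is abelian and $\mathrm{ad}\,x$ acts as the identity map on $L^2$. *)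

From HB Require Import structures.
From mathcomp Require Import all_boot all_order all_algebra.
Set Implicit Arguments. Unset Strict Implicit. Unset Printing Implicit Defensive.
Import GRing.Theory.
Local Open Scope ring_scope.

Section Lie.
Variables (F : fieldType) (V : vectType F) (br : V -> V -> V).

Definition is_lie_bracket : Prop :=
  [/\ forall (a : F) (x y z : V), br (a *: x + y) z = a *: br x z + br y z,
      forall (a : F) (x y z : V), br x (a *: y + z) = a *: br x y + br x z,
      forall x : V, br x x = 0
    & forall x y z : V, br x (br y z) + br y (br z x) + br z (br x y) = 0].

Definition brsp (A B : {vspace V}) : {vspace V} :=
  (<< [seq br u v | u <- vbasis A, v <- vbasis B] >>)%VS.

Definition subalgebra (U : {vspace V}) : Prop :=
  forall u v, u \in U -> v \in U -> br u v \in U.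

Definition ideal (I : {vspace V}) : Prop :=
  forall x y, y \in I -> br x y \in I.

(* subalgebra generated by the subspace X: iterate S |-> S + [S,S]
   (dim V many times suffices, as the dimension strictly grows until stable). *)
Definition genalg (X : {vspace V}) : {vspace V} :=
  iter (\dim {: V}) (fun S => (S + brsp S S)%VS) X.

Definition join_alg (U B : {vspace V}) : {vspace V} := genalg (U + B)%VS.

Definition covers (B A : {vspace V}) : Prop :=
  [/\ subalgebra A, subalgebra B, (A <= B)%VS, A != B &
      forall C, subalgebra C -> (A <= C)%VS -> (C <= B)%VS -> C = A \/ C = B].

Definition upper_modular (U : {vspace V}) : Prop :=
  forall B, subalgebra B -> covers B (U :&: B)%VS -> covers (join_alg U B) U.

Definition lower_modular (U : {vspace V}) : Prop :=
  forall B, subalgebra B -> covers (join_alg U B) U -> covers B (U :&: B)%VS.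

Definition semi_modular (U : {vspace V}) : Prop :=
  upper_modular U /\ lower_modular U.

Definition core_free (U : {vspace V}) : Prop :=
  forall I, ideal I -> (I <= U)%VS -> I = 0%VS.

Definition derived (k : nat) : {vspace V} := iter k (fun S => brsp S S) fullv.

Definition solvable : Prop := exists k, derived k = 0%VS.

Definition almost_abelian : Prop :=
  let L2 := brsp fullv fullv in
  exists x : V,
    [/\ (L2 + <[x]>)%VS = fullv, (L2 :&: <[x]>)%VS = 0%VS,
        (forall u v, u \in L2 -> v \in L2 -> br u v = 0)
      & forall u, u \in L2 -> br x u = u].

End Lie.

From HB Require Import structures.
From mathcomp Require Import all_boot all_order all_algebra.
Import GRing.Theory.
Set Implicit Arguments.
Unset Strict Implicit.
Unset Printing Implicit Defensive.
Local Open Scope ring_scope.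

(* Following the paper, we fix a non-zero
   abelian ideal N of L (the last non-zero term of the derived series) and
   argue as follows.
   1. For c outside the subalgebra U + N, <U, c> covers U (upper modularity),
      so <U, c> meets U + N only in U.  This makes U :&: N an ideal of L,
      hence U :&: N = 0 because U is core-free.
   2. For u in U and 0 <> a in N, the abelian subalgebra <a, [u, a]> generates
      with U the algebra <U, a>, which covers U; lower modularity makes it
      one-dimensional, so a is an eigenvector of ad u.  Hence ad u is a scalar
      al on N, and a second covering argument gives [u, y] - al y \in U for
      every y in L.
   3. The elements of U centralising N form an ideal, hence are zero; so
      u |-> al is injective, dim U = 1, and U = F x with [x, y] - y \in F x
      for all y.  From such an x and solvability we read off directly that L
      is almost abelian, with L^2 the 1-eigenspace of ad x. *)

Section LieAlgebra.
Variables (F : fieldType) (V : vectType F) (br : V -> V -> V).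
Hypothesis Hbr : is_lie_bracket br.

Lemma brlinl a x y z : br (a *: x + y) z = a *: br x z + br y z.
Proof. by case: Hbr. Qed.
Lemma brlinr a x y z : br x (a *: y + z) = a *: br x y + br x z.
Proof. by case: Hbr. Qed.
Lemma brxx x : br x x = 0.
Proof. by case: Hbr. Qed.
Lemma jacobi x y z : br x (br y z) + br y (br z x) + br z (br x y) = 0.
Proof. by case: Hbr. Qed.

Definition ad (u : V) : {linear V -> V} :=
  HB.pack (br u) (GRing.isLinear.Build F V V *:%R (br u) (fun a => brlinr a u)).
Definition rmul (v : V) : {linear V -> V} :=
  HB.pack (br^~ v)
    (GRing.isLinear.Build F V V *:%R (br^~ v) (fun a x y => brlinl a x y v)).

Lemma brDl x y z : br (x + y) z = br x z + br y z.
Proof. exact: (linearD (rmul z)). Qed.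
Lemma brDr x y z : br x (y + z) = br x y + br x z.
Proof. exact: (linearD (ad x)). Qed.
Lemma br0l z : br 0 z = 0.
Proof. exact: (linear0 (rmul z)). Qed.
Lemma br0r z : br z 0 = 0.
Proof. exact: (linear0 (ad z)). Qed.
Lemma brZl a x z : br (a *: x) z = a *: br x z.
Proof. exact: (linearZ_LR (rmul z)). Qed.
Lemma brZr a x z : br z (a *: x) = a *: br z x.
Proof. exact: (linearZ_LR (ad z)). Qed.
Lemma brNr x z : br z (- x) = - br z x.
Proof. exact: (linearN (ad z)). Qed.
Lemma brBl x y z : br (x - y) z = br x z - br y z.
Proof. exact: (linearB (rmul z)). Qed.

(* Alternation gives anticommutativity: expand [x + y, x + y] = 0. *)
Lemma br_anti x y : br x y = - br y x.
Proof.
have := brxx (x + y); rewrite brDl !brDr !brxx add0r addr0 => /eqP.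
by rewrite addr_eq0 => /eqP.
Qed.

Lemma linear_span_sub (f : {linear V -> V}) (X : seq V) (W : {vspace V}) :
  {in X, forall a, f a \in W} -> {in <<X>>%VS, forall u, f u \in W}.
Proof.
move=> fXW u; rewrite -(lfunE f) memv_preim; apply/subvP: u.
by apply/span_subvP => a /fXW; rewrite -memv_preim lfunE.
Qed.

(* [a, b] \in [A, B]: by bilinearity it suffices to check basis vectors. *)
Lemma brsp_mem (A B : {vspace V}) u v :
  u \in A -> v \in B -> br u v \in brsp br A B.
Proof.
rewrite -{1}(span_basis (vbasisP A)) -{1}(span_basis (vbasisP B)) => uA vB.
apply: (linear_span_sub (f := rmul v) _ uA) => a aA.
apply: (linear_span_sub (f := ad a) _ vB) => b bB.
by apply: memv_span; apply/allpairsP; exists (a, b).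
Qed.

Lemma brsp_sub (S A : {vspace V}) :
  subalgebra br A -> (S <= A)%VS -> (brsp br S S <= A)%VS.
Proof.
move=> sA /subvP SA; apply/span_subvP => w /allpairsP[[p q] [/= pS qS ->]].
by apply: sA; apply: SA; apply: vbasis_mem.
Qed.

Lemma subalgebra0 : subalgebra br 0%VS.
Proof. by move=> u v; rewrite memv0 => /eqP -> _; rewrite br0l mem0v. Qed.

Lemma subalgebraT : subalgebra br fullv.
Proof. by move=> u v _ _; apply: memvf. Qed.

Lemma subalgebra_line a : subalgebra br <[a]>%VS.
Proof.
move=> u v /vlineP[k ->] /vlineP[l ->].
by rewrite brZl brZr brxx !scaler0 mem0v.
Qed.

Lemma subalgebra_cap (A B : {vspace V}) :
  subalgebra br A -> subalgebra br B -> subalgebra br (A :&: B)%VS.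
Proof.
move=> sA sB u v /memv_capP[uA uB] /memv_capP[vA vB].
by apply/memv_capP; split; [apply: sA | apply: sB].
Qed.

Lemma subalgebra_add_ideal (A I : {vspace V}) :
  subalgebra br A -> ideal br I -> subalgebra br (A + I)%VS.
Proof.
move=> sA iI y1 y2 /memv_addP[u1 u1A [n1 n1I ->]] /memv_addP[u2 u2A [n2 n2I ->]].
rewrite brDl !brDr addrA; apply: memvD; last exact/(subvP (addvSr A I))/iI.
apply: memvD; first apply: memvD; first exact/(subvP (addvSl A I))/sA.
  exact/(subvP (addvSr A I))/iI.
by apply/(subvP (addvSr A I)); rewrite br_anti memvN iI.
Qed.

Lemma genalg_ge (X : {vspace V}) : (X <= genalg br X)%VS.
Proof.
rewrite /genalg; elim: (\dim {:V}) => [|n IH] //=.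
exact: subv_trans IH (addvSl _ _).
Qed.

Lemma genalg_least (X A : {vspace V}) :
  subalgebra br A -> (X <= A)%VS -> (genalg br X <= A)%VS.
Proof.
move=> sA XA; rewrite /genalg; elim: (\dim {:V}) => [|n IH] //=.
by rewrite subv_add IH /= brsp_sub.
Qed.

Lemma genalg_subalgebra (X : {vspace V}) : subalgebra br (genalg br X).
Proof.
pose step S := (S + brsp br S S)%VS.
have grow k : (k <= \dim (iter k step X))%N \/ step (iter k step X) = iter k step X.
  elim: k => [|k [IH|IH]]; [by left | | by right; rewrite iterS IH IH].
  have [E|NE] := eqVneq (step (iter k step X)) (iter k step X).
    by right; rewrite iterS E E.
  left; rewrite iterS.
  have : iter k step X != step (iter k step X) by rewrite eq_sym.
  by rewrite eqEdim addvSl /= -ltnNge; apply: leq_ltn_trans IH.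
rewrite /genalg -/step; case: (grow (\dim {:V})) => [full|stable].
  have -> : iter (\dim {:V}) step X = fullv by apply/eqP; rewrite eqEdim subvf.
  exact: subalgebraT.
by move=> u v uS vS; rewrite -stable; apply/(subvP (addvSr _ _))/brsp_mem.
Qed.

Lemma join_line_sub (U : {vspace V}) c : (U <= join_alg br U <[c]>)%VS.
Proof. exact: subv_trans (addvSl _ _) (genalg_ge _). Qed.

Lemma join_line_mem (U : {vspace V}) c : c \in join_alg br U <[c]>.
Proof. exact/(subvP (genalg_ge _))/(subvP (addvSr _ _))/memv_line. Qed.

Lemma eq0_vspace (X : {vspace V}) : (forall v, v \in X -> v = 0) -> X = 0%VS.
Proof.
move=> X0; apply/eqP; rewrite -subv0; apply/subvP => v vX.
by rewrite memv0 (X0 v vX).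
Qed.

Lemma covers_line a : a != 0 -> covers br <[a]>%VS 0%VS.
Proof.
move=> a0; split; [exact: subalgebra0 | exact: subalgebra_line | exact: sub0v | | ].
  by rewrite eq_sym -dimv_eq0 dim_vline a0.
move=> C _ _ CA; have [->|Cn0] := eqVneq C 0%VS; [by left | right].
apply/eqP; rewrite eqEdim CA dim_vline a0 /=.
by rewrite lt0n dimv_eq0.
Qed.

Lemma cap_line0 (U : {vspace V}) a : a \notin U -> (U :&: <[a]>)%VS = 0%VS.
Proof.
move=> aU; apply: eq0_vspace => v /memv_capP[vU /vlineP[k def]].
have [k0|kn0] := eqVneq k 0; first by rewrite def k0 scale0r.
move: aU; have -> : a = k^-1 *: v by rewrite def scalerA mulVf // scale1r.
by rewrite memvZ.
Qed.

Lemma um_join_line (U : {vspace V}) c :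
  upper_modular br U -> c \notin U -> covers br (join_alg br U <[c]>) U.
Proof.
move=> um cU; apply: um; first exact: subalgebra_line.
rewrite cap_line0 //; apply: covers_line.
by apply: contraNneq cU => ->; rewrite mem0v.
Qed.

(* [I, I] is an ideal when I is, by the Jacobi identity; hence every term
   of the derived series is an ideal. *)
Lemma ideal_brsp (I : {vspace V}) : ideal br I -> ideal br (brsp br I I).
Proof.
move=> iI x y; apply: (linear_span_sub (f := ad x)).
move=> _ /allpairsP[[p q] [/= /vbasis_mem pI /vbasis_mem qI ->]] /=.
have := jacobi x p q => /eqP; rewrite -addrA addr_eq0 => /eqP ->.
rewrite memvN; apply: memvD; apply: brsp_mem => //; last exact: iI.
by rewrite br_anti memvN iI.
Qed.

Lemma derived_ideal k : ideal br (derived br k).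
Proof.
elim: k => [|k IH]; first by move=> x y _; apply: memvf.
by rewrite /derived iterS; apply: ideal_brsp.
Qed.

(* A non-zero solvable Lie algebra has a non-zero abelian ideal: the last
   non-zero term of its derived series. *)
Lemma abelian_ideal_exists : solvable br -> fullv != 0%VS :> {vspace V} ->
  exists N : {vspace V}, [/\ ideal br N, N != 0%VS &
     forall u v, u \in N -> v \in N -> br u v = 0].
Proof.
move=> [k Hk] L0.
suff [j [Dj0 Dj1]] : exists j, derived br j != 0%VS /\ derived br j.+1 = 0%VS.
  exists (derived br j); split => //; first exact: derived_ideal.
  move=> u v uN vN; apply/eqP; rewrite -memv0 -Dj1 /derived iterS.
  exact: brsp_mem.
elim: k Hk => [|k IH] Dk; first by move: L0; rewrite -Dk eqxx.
by have [/IH|] := eqVneq (derived br k) 0%VS; last exists k.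
Qed.

Lemma perfect_solvable : brsp br fullv fullv = fullv -> solvable br ->
  fullv = 0%VS :> {vspace V}.
Proof.
move=> perfect [k Dk]; rewrite -Dk; elim: k {Dk} => [|k IH] //.
by rewrite /derived iterS -/(derived br k) -IH.
Qed.

Lemma eigen_scalar (f : {linear V -> V}) (N : {vspace V}) a al :
  (forall n, n \in N -> n != 0 -> f n \in <[n]>%VS) ->
  a \in N -> a != 0 -> f a = al *: a -> forall n, n \in N -> f n = al *: n.
Proof.
move=> eig aN a0 fa n nN.
have [->|n0] := eqVneq n 0; first by rewrite linear0 scaler0.
have /vlineP[be fn] := eig n nN n0.
have [/vlineP[t ->]|naN] := boolP (n \in <[a]>%VS).
  by rewrite linearZ /= fa !scalerA mulrC.
have na0 : n + a != 0.
  apply: contra naN; rewrite addr_eq0 => /eqP ->.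
  by rewrite memvN memv_line.
have /vlineP[g fna] := eig (n + a) (memvD nN aN) na0.
rewrite linearD fn fa scalerDr in fna.
have comb : (be - g) *: n = (g - al) *: a.
  by rewrite !scalerBl; apply/eqP; rewrite subr_eq addrAC eq_sym subr_eq fna addrC.
have [beg|beg] := eqVneq be g.
  move: comb; rewrite beg subrr scale0r => /esym/eqP.
  by rewrite scaler_eq0 (negbTE a0) orbF subr_eq0 fn beg => /eqP ->.
case/negP: naN; rewrite (_ : n = ((be - g)^-1 * (g - al)) *: a) ?memvZ ?memv_line //.
by rewrite -scalerA -comb scalerA mulVf ?scale1r // subr_eq0.
Qed.

Section CoreFreeSemiModular.
Variables (U N : {vspace V}).
Hypotheses (sU : subalgebra br U) (cfU : core_free br U).
Hypotheses (umU : upper_modular br U) (lmU : lower_modular br U).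
Hypotheses (iN : ideal br N) (abN : forall u v, u \in N -> v \in N -> br u v = 0).

(* For c outside U + N, the subalgebra <U, c> meets U + N only in U, since
   <U, c> covers U and c is not in the intermediate subalgebra
   <U, c> :&: (U + N). *)
Lemma join_line_capN c v :
  c \notin (U + N)%VS -> v \in join_alg br U <[c]> -> v \in N -> v \in U.
Proof.
move=> cT vM vN.
have cU : c \notin U by apply: contra cT; apply/subvP/addvSl.
have [_ _ _ _ maxM] := um_join_line umU cU.
have sMT := subalgebra_cap (@genalg_subalgebra (U + <[c]>)%VS)
  (subalgebra_add_ideal sU iN).
have UMT : (U <= join_alg br U <[c]> :&: (U + N))%VS.
  by rewrite subv_cap join_line_sub addvSl.
case: (maxM _ sMT UMT (capvSl _ _)) => [<- | MT].
  by rewrite memv_cap vM; apply/(subvP (addvSr _ _)).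
by move: (join_line_mem U c); rewrite -MT memv_cap (negbTE cT) andbF.
Qed.

(* U :&: N is an ideal of L, hence zero since U is core-free. *)
Lemma capUN0 v : v \in U -> v \in N -> v = 0.
Proof.
suff UN0 : (U :&: N)%VS = 0%VS.
  by move=> vU vN; apply/eqP; rewrite -memv0 -UN0 memv_cap vU vN.
apply: cfU; last exact: capvSl.
move=> y w /memv_capP[wU wN]; rewrite memv_cap iN // andbT.
have [/memv_addP[u uU [n nN ->]] | yT] := boolP (y \in (U + N)%VS).
  by rewrite brDl (abN nN wN) addr0 sU.
apply: join_line_capN yT _ (iN _ wN).
by apply: genalg_subalgebra; [apply: join_line_mem | apply/(subvP (join_line_sub _ _))].
Qed.

(* Every non-zero a in N is an eigenvector of ad u for u in U: the abelian
   subalgebra B = <a, [u, a]> satisfies <U, B> = <U, a>, which covers U, so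
   by lower modularity B covers U :&: B = 0 and is a line. *)
Lemma U_eigenvector u a : u \in U -> a \in N -> a != 0 -> br u a \in <[a]>%VS.
Proof.
move=> uU aN a0.
have aU : a \notin U by apply: contra a0 => aU; rewrite (capUN0 aU aN).
pose B := (<[a]> + <[br u a]>)%VS.
have BN : (B <= N)%VS by rewrite subv_add -!memvE aN iN.
have sB : subalgebra br B.
  by move=> x y xB yB; rewrite abN ?mem0v //; apply: (subvP BN).
have JB : join_alg br U B = join_alg br U <[a]>.
  apply/eqP; rewrite eqEsubv; apply/andP; split; apply: genalg_least.
  - exact: genalg_subalgebra.
  - rewrite subv_add join_line_sub subv_add -!memvE join_line_mem /=.
    apply: genalg_subalgebra; last exact: join_line_mem.
    exact/(subvP (join_line_sub _ _)).
  - exact: genalg_subalgebra.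
  - by rewrite subv_add (subv_trans (addvSl U B) (genalg_ge _)) /=
      (subv_trans (addvSl _ _) (subv_trans (addvSr U B) (genalg_ge _))).
have UB0 : (U :&: B)%VS = 0%VS.
  by apply: eq0_vspace => v /memv_capP[vU vB]; apply: capUN0 => //; apply: (subvP BN).
have := lmU sB; rewrite JB UB0 => /(_ (um_join_line umU aU))[_ _ _ _ maxB].
case: (maxB <[a]>%VS (@subalgebra_line a) (sub0v _) (addvSl _ _)) => [|->].
  by move/eqP; rewrite -dimv_eq0 dim_vline a0.
exact/(subvP (addvSr _ _))/memv_line.
Qed.

Lemma U_scalar u a al n : u \in U -> a \in N -> a != 0 ->
  br u a = al *: a -> n \in N -> br u n = al *: n.
Proof.
move=> uU aN a0 ua.
exact: (eigen_scalar (f := ad u) (fun m mN m0 => U_eigenvector uU mN m0) aN a0 ua).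
Qed.

(* If ad u = al on N, then [u, y] - al y \in U for all y: for y outside
   U + N and c = y + a, the element [u, y] - al y = [u, c] - al c lies in
   <U, y> :&: <U, c>, which is U because <U, y> covers U and y \notin <U, c>
   (otherwise a = c - y would lie in <U, c> :&: N, which is inside U). *)
Lemma U_shift u a al y : u \in U -> a \in N -> a != 0 ->
  br u a = al *: a -> br u y - al *: y \in U.
Proof.
move=> uU aN a0 ua.
have [/memv_addP[u' u'U [n nN ->]] | yT] := boolP (y \in (U + N)%VS).
  rewrite brDr (U_scalar uU aN a0 ua nN) scalerDr opprD addrACA subrr addr0.
  by rewrite memvB ?memvZ ?sU.
pose c := y + a.
have cT : c \notin (U + N)%VS.
  apply: contra yT => cT; have -> : y = c - a by rewrite /c addrK.
  by rewrite memvB //; apply/(subvP (addvSr _ _)).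
have yU : y \notin U by apply: contra yT; apply/subvP/addvSl.
have [_ _ _ _ maxM] := um_join_line umU yU.
have inM z : br u z - al *: z \in join_alg br U <[z]>.
  have sM := @genalg_subalgebra (U + <[z]>)%VS.
  by rewrite memvB ?memvZ ?join_line_mem // sM ?join_line_mem //;
    apply/(subvP (join_line_sub _ _)).
have shift_c : br u y - al *: y = br u c - al *: c.
  by rewrite /c brDr ua scalerDr opprD addrACA subrr addr0.
have UMM : (U <= join_alg br U <[y]> :&: join_alg br U <[c]>)%VS.
  by rewrite subv_cap !join_line_sub.
have sMM := subalgebra_cap (@genalg_subalgebra (U + <[y]>)%VS)
  (@genalg_subalgebra (U + <[c]>)%VS).
case: (maxM _ sMM UMM (capvSl _ _)) => [<- | MM].
  by rewrite memv_cap inM shift_c inM.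
have := join_line_mem U y; rewrite -MM memv_cap => /andP[_ yMc].
have aMc : a \in join_alg br U <[c]>.
  have -> : a = c - y by rewrite /c (addrC y a) addrK.
  by rewrite memvB // join_line_mem.
by move: a0; rewrite (capUN0 (join_line_capN cT aMc aN) aN) eqxx.
Qed.

(* The elements of U centralising some a <> 0 of N form an ideal of L, hence
   vanish since U is core-free. *)
Lemma U_faithful a z : a \in N -> a != 0 -> z \in U -> br z a = 0 -> z = 0.
Proof.
move=> aN a0; pose K := (U :&: lker (linfun (rmul a)))%VS.
have memK w : (w \in K) = (w \in U) && (br w a == 0).
  by rewrite memv_cap memv_ker lfunE.
suff K0 : K = 0%VS by move=> zU za; apply/eqP; rewrite -memv0 -K0 memK zU za eqxx.
apply: cfU; last exact: capvSl.
move=> x w; rewrite !memK => /andP[wU /eqP wa].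
have wa' : br w a = 0 *: a by rewrite scale0r.
have wN := U_scalar wU aN a0 wa'.
apply/andP; split.
  by rewrite br_anti memvN; have := U_shift x wU aN a0 wa'; rewrite scale0r subr0.
have axN : br a x \in N by rewrite br_anti memvN iN.
have := jacobi x w a; rewrite wa br0r add0r (wN _ axN) scale0r add0r => xw.
by rewrite br_anti xw oppr0.
Qed.

Lemma U_line_shift : U != 0%VS -> N != 0%VS ->
  exists x, \dim U = 1%N /\ forall y, br x y - y \in <[x]>%VS.
Proof.
move=> U0 N0; pose u0 := vpick U; pose a := vpick N.
have aN : a \in N := memv_pick N.
have a0 : a != 0 by rewrite vpick0.
have eigval u : u \in U -> exists al, br u a = al *: a.
  by move=> uU; apply/vlineP; apply: U_eigenvector.
have u0U : u0 \in U := memv_pick U.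
have [al0 ua0] := eigval u0 u0U.
have al00 : al0 != 0.
  apply: contraNneq U0 => al0_0; rewrite -vpick0 -/u0.
  by apply/eqP/(U_faithful aN a0 u0U); rewrite ua0 al0_0 scale0r.
pose x := al0^-1 *: u0.
have xU : x \in U by rewrite memvZ.
have xa : br x a = 1 *: a by rewrite brZl ua0 scalerA mulVf.
have Ux : U = <[x]>%VS.
  apply/eqP; rewrite eqEsubv -memvE xU andbT; apply/subvP => u uU.
  have [al ua] := eigval u uU.
  have : u - al *: x = 0.
    apply: U_faithful aN a0 _ _; first by rewrite memvB ?memvZ.
    by rewrite brBl brZl xa ua scale1r subrr.
  by move/eqP; rewrite subr_eq0 => /eqP ->; rewrite memvZ ?memv_line.
have x0 : x != 0.
  by apply: contraNneq a0 => x0; rewrite -[a]scale1r -xa x0 br0l.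
exists x; split; first by rewrite Ux dim_vline x0.
by move=> y; rewrite -Ux; have := U_shift y xU aN a0 xa; rewrite scale1r.
Qed.

End CoreFreeSemiModular.

Section ShiftElement.
Variable x : V.
Hypothesis shift_x : forall y, br x y - y \in <[x]>%VS.

Let E := lker (linfun (ad x) - \1)%VF.

Lemma memE e : (e \in E) = (br x e == e).
Proof. by rewrite memv_ker !lfun_simp subr_eq0. Qed.

Lemma shift_decomp y : exists2 e, e \in E & exists t, y = e + t *: x.
Proof.
have /vlineP[t ty] := shift_x y.
exists (y + t *: x); last by exists (- t); rewrite scaleNr addrK.
by rewrite memE brDr brZr brxx scaler0 addr0 addrC -subr_eq ty.
Qed.

(* Jacobi gives [x, [e, e']] = 2 [e, e'], so [e, e'] = t x; if t <> 0 then
   L = [L, L], which is impossible in a non-zero solvable algebra. *)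
Lemma eigenspace_abelian e e' : solvable br -> e \in E -> e' \in E -> br e e' = 0.
Proof.
rewrite !memE => solv /eqP xe /eqP xe'.
have := jacobi x e e'; rewrite (br_anti e' x) xe' brNr xe (br_anti e' e).
rewrite -!addrA => /eqP; rewrite addr_eq0 opprD !opprK => /eqP xw.
have /vlineP[t wt] : br e e' \in <[x]>%VS by have := shift_x (br e e'); rewrite xw addrK.
have [t0|tn0] := eqVneq t 0; first by rewrite wt t0 scale0r.
suff perfect : brsp br fullv fullv = fullv.
  by apply/eqP; rewrite -memv0 -(perfect_solvable perfect solv) memvf.
apply/eqP; rewrite eqEsubv subvf /=; apply/subvP => v _.
have [e1 /[!memE] /eqP xe1 [s ->]] := shift_decomp v.
apply: memvD; first by rewrite -xe1; apply: brsp_mem; apply: memvf.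
rewrite memvZ // (_ : x = t^-1 *: br e e') ?memvZ ?brsp_mem ?memvf //.
by rewrite wt scalerA mulVf ?scale1r.
Qed.

(* L^2 = E: brackets of e + s x and e' + t x give s e' - t e, and every
   e \in E equals [x, e]. *)
Lemma derived1_eigenspace : solvable br -> brsp br fullv fullv = E.
Proof.
move=> solv; apply/eqP; rewrite eqEsubv; apply/andP; split.
  apply/span_subvP => _ /allpairsP[[p q] [_ _ ->]] /=.
  have [e eE [s ->]] := shift_decomp p; have [e' e'E [t ->]] := shift_decomp q.
  rewrite brDl !brDr !brZl !brZr brxx !scaler0 addr0 eigenspace_abelian // add0r.
  move: (eE) (e'E); rewrite !memE => /eqP xe /eqP xe'.
  by rewrite (br_anti e x) xe xe' brDr !brZr brNr xe xe'.
apply/subvP => e; rewrite memE => /eqP <-; apply: brsp_mem; apply: memvf.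
Qed.

Lemma almost_abelian_of_shift : solvable br -> almost_abelian br.
Proof.
move=> solv; exists x; rewrite derived1_eigenspace //; split.
- apply/eqP; rewrite eqEsubv subvf /=; apply/subvP => v _.
  have [e eE [s ->]] := shift_decomp v.
  by apply: memv_add => //; rewrite memvZ ?memv_line.
- apply: eq0_vspace => v /memv_capP[vE /vlineP[t vt]].
  by move: vE; rewrite memE vt brZr brxx scaler0 eq_sym => /eqP.
- by move=> u v; apply: eigenspace_abelian.
- by move=> u; rewrite memE => /eqP.
Qed.

End ShiftElement.

End LieAlgebra.

Unset Implicit Arguments.

Theorem corollary2p4 (F : fieldType) (V : vectType F) (br : V -> V -> V)
    (Hbr : is_lie_bracket br) (U : {vspace V}) :
  solvable br -> subalgebra br U -> U != 0%VS -> core_free br U ->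
  semi_modular br U ->
  \dim U = 1%N /\ almost_abelian br.
Proof.
move=> solv sU U0 cfU [umU lmU].
have L0 : fullv != 0%VS :> {vspace V}.
  by apply: contraNneq U0 => L0; rewrite -subv0 -L0 subvf.
have [N [iN N0 abN]] := abelian_ideal_exists Hbr solv L0.
have [x [dimU shift_x]] := U_line_shift Hbr sU cfU umU lmU iN abN U0 N0.
by split; last exact: almost_abelian_of_shift shift_x solv.
Qed.
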